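(* Let $\psi$ be an $\mathcal{L}_\nu$-formula that is positive in $X$. Then for every belief model $(\Omega,\dots)$ for a game $G$, the operator $E\mapsto[\![\psi]\!]_E$ on $\mathcal P(\Omega)$ is monotonic; consequently $[\![\nu X.\psi]\!]=\bigcup\{E\subseteq\Omega: E\subseteq[\![\psi]\!]_E\}$.
   Context: Game, restrictions, $\mathcal{L}_O$, optimality conditions: $G=(T_1,\dots,T_n,<_1,\dots,<_n)$, $\ge_i$ reflexive closure of $<_i$; an optimality condition for $i$ is a closed first-order formula over atoms $C(a)$, $a\ge^i_cb$, constant $o$, interpreted in $(G,G',s)$ by $C(x)$ iff $\alpha(x)_j\in G'_j\ \forall j$ and $x\ge^i_zy$ iff $(\alpha(x)_i,\alpha(z)_{-i})\ge_i(\alpha(y)_i,\alpha(z)_{-i})$ ($o\mapsto s$); positive if all $C(\cdot)$ occur under an even number of negations. Belief model $(\Omega,\bar s_1,\dots,\bar s_n,P_1,\dots,P_n)$, $\bar s_i:\Omega\to T_i$, $P_i:\Omega\to2^\Omega$, $(G_E)_i=\{\bar s_i(u):u\in E\}$. $\mathcal{L}_\nu$: $\psi::=\mathit{rat}_{\phi_i}\mid X\mid\psi\wedge\psi\mid\neg\psi\mid\Box_i\psi\mid O_{\phi_i}\psi\mid\nu X.\psi$ ($\nu$-free body). Semantics: $[\![\mathit{rat}_{\phi_i}]\!]_E=\{\omega:(G,G_{P_i(\omega)},\bar s(\omega))\models\phi_i\}$, $[\![X]\!]_E=E$, intersections/complements, $[\![\Box_i\psi]\!]_E=\{\omega:P_i(\omega)\subseteq[\![\psi]\!]_E\}$,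 $[\![O_{\phi_i}\psi]\!]_E=\{\omega:(G,G_{[\![\psi]\!]_E},\bar s(\omega))\models\phi_i\}$, $[\![\nu X.\psi]\!]_E$ = outcome of transfinite iteration from $\Omega$ of $F\mapsto[\![\psi]\!]_F\cap F$ (intersections at limits). $\psi$ is positive in $X$ if each occurrence of $X$ is under an even number of negations and inside $O_{\phi_i}$ only when $\phi_i$ is positive. *)

From mathcomp Require Import all_boot.
Set Implicit Arguments. Unset Strict Implicit. Unset Printing Implicit Defensive.

Record game (n : nat) := Game {
  strat : 'I_n -> Type;
  pref  : 'I_n -> (forall j, strat j) -> (forall j, strat j) -> Prop }.

Arguments strat {n} g _ : rename.
Arguments pref {n} g _ _ _ : rename.

Definition profile n (G : game n) := forall j : 'I_n, strat G j.

Definition gepref n (G : game n) (i : 'I_n) (x y : profile G) : Prop :=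
  pref G i y x \/ x = y.
Arguments gepref {n} G i x y.

(* (s_i, p_{-i}) : profile p with the i-th component replaced by s *)
Definition upd n (T : 'I_n -> Type) (p : forall j, T j) (i : 'I_n) (s : T i)
  : forall j, T j :=
  fun j => match i =P j with ReflectT e => eq_rect i T s j e | ReflectF _ => p j end.

(* Variables of type V (nested de Bruijn); closed formulas have V = void. *)
Inductive oterm (V : Type) : Type :=
| OVar (v : V)
| OConst.
Arguments OConst {V}.

Inductive ocond (V : Type) : Type :=
| OC   : oterm V -> ocond V
| OGe  : oterm V -> oterm V -> oterm V -> ocond V    (* OGe a c b  is  a >=^i_c b *)
| ONeg : ocond V -> ocond V
| OAnd : ocond V -> ocond V -> ocond V
| OEx  : ocond (option V) -> ocond V.
Arguments OC {V}. Arguments OGe {V}. Arguments ONeg {V}.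
Arguments OAnd {V}. Arguments OEx {V}.

Definition oeval n (G : game n) (s : profile G) V (env : V -> profile G)
  (t : oterm V) : profile G :=
  match t with OVar v => env v | OConst => s end.

Fixpoint osat n (G : game n) (i : 'I_n) (G' : forall j, strat G j -> Prop)
  (s : profile G) V (f : ocond V) (env : V -> profile G) {struct f} : Prop :=
  match f with
  | OC a => forall j, G' j (oeval s env a j)
  | OGe a c b =>
      gepref G i (upd (oeval s env c) (oeval s env a i))
                 (upd (oeval s env c) (oeval s env b i))
  | ONeg g => ~ osat i G' s g env
  | OAnd g h => osat i G' s g env /\ osat i G' s h env
  | OEx g => exists x : profile G,
      osat i G' s g (fun o => match o with Some v => env v | None => x end)
  end.

Definition omodels n (G : game n) (i : 'I_n) (G' : forall j, strat G j -> Prop)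
  (s : profile G) (phi : ocond void) : Prop :=
  osat i G' s phi (fun v => match v with end).

(* positivity: every C(.) occurs under an even number of negations;
   b = true means "even number of negations so far" *)
Fixpoint posC V (b : bool) (f : ocond V) : Prop :=
  match f with
  | OC _ => b = true
  | OGe _ _ _ => True
  | ONeg g => posC (~~ b) g
  | OAnd g h => posC b g /\ posC b h
  | OEx g => posC b g
  end.

Definition positive_cond (phi : ocond void) : Prop := posC true phi.

Record bmodel n (G : game n) := BModel {
  world : Type;
  sbar  : forall i : 'I_n, world -> strat G i;
  poss  : 'I_n -> world -> world -> Prop }.

Arguments world {n g} b : rename.
Arguments sbar {n g} b _ _ : rename.
Arguments poss {n g} b _ _ _ : rename.

Definition Gset n (G : game n) (M : bmodel G) (E : world M -> Prop)
  : forall j, strat G j -> Prop :=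
  fun j t => exists u, E u /\ sbar M j u = t.

Definition sprof n (G : game n) (M : bmodel G) (w : world M) : profile G :=
  fun j => sbar M j w.

(* The stages of the transfinite iteration of f from W: the least class containing
   W, closed under f (successor steps) and under intersections (limit steps).
   The outcome is the intersection of all stages (= the final, stable stage). *)
Inductive stage (W : Type) (f : (W -> Prop) -> (W -> Prop)) : (W -> Prop) -> Prop :=
| stage_top : stage f (fun _ => True)
| stage_step F : stage f F -> stage f (f F)
| stage_lim (S : (W -> Prop) -> Prop) :
    (forall F, S F -> stage f F) -> stage f (fun w => forall F, S F -> F w).

Definition tf_iter (W : Type) (f : (W -> Prop) -> (W -> Prop)) : W -> Prop :=
  fun w => forall F, stage f F -> F w.

Inductive fml (n : nat) : Type :=
| Rat  : 'I_n -> ocond void -> fml n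
| FX   : fml n
| FAnd : fml n -> fml n -> fml n
| FNeg : fml n -> fml n
| Box  : 'I_n -> fml n -> fml n
| Opt  : 'I_n -> ocond void -> fml n -> fml n
| Nu   : fml n -> fml n.

Fixpoint nu_free n (psi : fml n) : Prop :=
  match psi with
  | Rat _ _ | FX => True
  | FAnd a b => nu_free a /\ nu_free b
  | FNeg a | Box _ a | Opt _ _ a => nu_free a
  | Nu _ => False
  end.

Fixpoint wf n (psi : fml n) : Prop :=
  match psi with
  | Rat _ _ | FX => True
  | FAnd a b => wf a /\ wf b
  | FNeg a | Box _ a | Opt _ _ a => wf a
  | Nu a => nu_free a
  end.

Fixpoint occX n (psi : fml n) : Prop :=
  match psi with
  | Rat _ _ => False
  | FX => True
  | FAnd a b => occX a \/ occX b
  | FNeg a | Box _ a | Opt _ _ a => occX a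
  | Nu _ => False
  end.

(* positivity in X (b = true: even number of negations so far); occurrences of X
   bound by an inner nu are not occurrences of the free variable X *)
Fixpoint posX n (b : bool) (psi : fml n) : Prop :=
  match psi with
  | Rat _ _ => True
  | FX => b = true
  | FAnd a c => posX b a /\ posX b c
  | FNeg a => posX (~~ b) a
  | Box _ a => posX b a
  | Opt _ phi a => posX b a /\ (occX a -> positive_cond phi)
  | Nu _ => True
  end.

Definition positive_in_X n (psi : fml n) : Prop := posX true psi.

Fixpoint sem n (G : game n) (M : bmodel G) (psi : fml n) (E : world M -> Prop)
  {struct psi} : world M -> Prop :=
  match psi with
  | Rat i phi => fun w => omodels i (Gset (poss M i w)) (sprof w) phi
  | FX => E
  | FAnd a b => fun w => sem (M:=M) a E w /\ sem (M:=M) b E w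
  | FNeg a => fun w => ~ sem (M:=M) a E w
  | Box i a => fun w => forall u, poss M i w u -> sem (M:=M) a E u
  | Opt i phi a => fun w => omodels i (Gset (sem (M:=M) a E)) (sprof w) phi
  | Nu a => tf_iter (fun F w => sem (M:=M) a F w /\ F w)
  end.
Arguments sem {n G} M psi E _.

(* Monotonicity is proved by induction on psi, tracking the parity b of the
   number of negations above the current position: below an even number of
   negations, [[.]] grows with E, below an odd number it shrinks.  X occurs only
   positively, so the parity there is even; inside O_phi the set [[a]]_E feeds
   the restriction G' of an optimality condition, which is monotone in G' when
   phi is positive, and constant in E when X does not occur in a.  Given
   monotonicity, the transfinite iteration of F |-> [[psi]]_F /\ F from Omega
   stops at the greatest post-fixed point (Knaster-Tarski). *)
From mathcomp Require Import all_boot.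
From Stdlib Require Import Classical.

Definition covary (b : bool) (P Q : Prop) : Prop := if b then P -> Q else Q -> P.

Lemma covary_iff b P Q : (P <-> Q) -> covary b P Q.
Proof. by case: b => -[]. Qed.

Lemma covary_not b P Q : covary (~~ b) P Q -> covary b (~ P) (~ Q).
Proof. by case: b => /= PQ nP ?; apply: nP; apply: PQ. Qed.

Lemma covary_and b P P' Q Q' :
  covary b P Q -> covary b P' Q' -> covary b (P /\ P') (Q /\ Q').
Proof. by case: b => /= PQ PQ' [? ?]; split; auto. Qed.

Lemma covary_ex b A (P Q : A -> Prop) :
  (forall x, covary b (P x) (Q x)) -> covary b (exists x, P x) (exists x, Q x).
Proof. by case: b => /= PQ [x ?]; exists x; apply: PQ. Qed.

Lemma covary_all b A (P Q : A -> Prop) :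
  (forall x, covary b (P x) (Q x)) -> covary b (forall x, P x) (forall x, Q x).
Proof. by case: b => /= PQ H x; apply: PQ. Qed.

Lemma covary_flip b c P Q : covary (~~ c == b) P Q = covary (~~ (c == b)) P Q.
Proof. by case: b c => -[]. Qed.

(* [osat] only accepts variable types [V : Set], so the generated [ocond_ind],
   which quantifies over [V : Type], cannot be used for it. *)
Fixpoint ocond_ind_Set (P : forall V : Set, ocond V -> Prop)
  (P_C : forall (V : Set) a, P V (OC a))
  (P_Ge : forall (V : Set) a c b, P V (OGe a c b))
  (P_Neg : forall (V : Set) g, P V g -> P V (ONeg g))
  (P_And : forall (V : Set) g, P V g -> forall h, P V h -> P V (OAnd g h))
  (P_Ex : forall (V : Set) g, P (option V) g -> P V (OEx g))
  (V : Set) (f : ocond V) {struct f} : P V f :=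
  let IH := @ocond_ind_Set P P_C P_Ge P_Neg P_And P_Ex in
  match f with
  | OC a => P_C V a
  | OGe a c b => P_Ge V a c b
  | ONeg g => P_Neg V g (IH _ g)
  | OAnd g h => P_And V g (IH _ g) h (IH _ h)
  | OEx g => P_Ex V g (IH _ g)
  end.

Section OptimalityConditions.

Variables (n : nat) (G : game n) (i : 'I_n) (s : profile G).

Lemma osat_ext (G1 G2 : forall j, strat G j -> Prop) (V : Set) (f : ocond V) env :
  (forall j t, G1 j t <-> G2 j t) -> osat i G1 s f env <-> osat i G2 s f env.
Proof.
move=> G12.
elim/ocond_ind_Set: V / f env => [V a|V a c b|V g IH|V g IHg h IHh|V g IH] env /=.
- by split=> H j; apply/G12.
- by [].
- by rewrite IH.
- by rewrite IHg IHh.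
- by split=> -[x Hx]; exists x; apply/IH.
Qed.

(* [c] is the parity of the position of f, [b] the direction in which G' varies. *)
Lemma osat_covary (G1 G2 : forall j, strat G j -> Prop) b (V : Set) (f : ocond V) :
  (forall j t, covary b (G1 j t) (G2 j t)) ->
  forall c env, posC c f -> covary (c == b) (osat i G1 s f env) (osat i G2 s f env).
Proof.
move=> G12.
elim/ocond_ind_Set: V / f => [V a|V a c' b'|V g IH|V g IHg h IHh|V g IH] c env /=.
- by move=> ->; apply: covary_all => j; apply: G12.
- by move=> _; apply: covary_iff.
- by move=> /(IH _ env); rewrite covary_flip; apply: covary_not.
- by case=> /(IHg _ env) Hg /(IHh _ env) Hh; apply: covary_and.
- by move=> pos; apply: covary_ex => x; apply: IH.
Qed.

Lemma omodels_covary (G1 G2 : forall j, strat G j -> Prop) b phi :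
  positive_cond phi -> (forall j t, covary b (G1 j t) (G2 j t)) ->
  covary b (omodels i G1 s phi) (omodels i G2 s phi).
Proof.
move=> pos_phi G12.
have := @osat_covary G1 G2 b _ phi G12 true (fun v => match v with end) pos_phi.
by case: b {G12}.
Qed.

End OptimalityConditions.

Section Semantics.

Variables (n : nat) (G : game n) (M : bmodel G).

Lemma Gset_covary b (E F : world M -> Prop) :
  (forall u, covary b (E u) (F u)) ->
  forall (j : 'I_n) (t : strat G j), covary b (Gset E t) (Gset F t).
Proof.
move=> EF j t; apply: covary_ex => u.
by apply: covary_and; [apply: EF | apply: covary_iff].
Qed.

Lemma Gset_ext (E F : world M -> Prop) :
  (forall u, E u <-> F u) ->
  forall (j : 'I_n) (t : strat G j), Gset E t <-> Gset F t.
Proof. by move=> EF j t; split=> -[u [Hu <-]]; exists u; split=> //; apply/EF. Qed.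

Lemma sem_indep_X (psi : fml n) :
  ~ occX psi -> forall E F w, sem M psi E w <-> sem M psi F w.
Proof.
elim: psi => [j phi||a IHa c IHc|a IHa|j a IHa|j phi a IHa|a IHa] /= noX E F w //.
- have [noXa noXc] : ~ occX a /\ ~ occX c by split=> ?; apply: noX; [left | right].
  by rewrite (IHa noXa E F) (IHc noXc E F).
- by rewrite (IHa noX E F).
- by split=> H u /H /(IHa noX E F u).
- by apply: osat_ext; apply: Gset_ext => u; apply: IHa.
Qed.

Lemma sem_covary (psi : fml n) b (E F : world M -> Prop) :
  (forall w, covary b (E w) (F w)) ->
  forall c, posX c psi -> forall w, covary (c == b) (sem M psi E w) (sem M psi F w).
Proof.
move=> EF; elim: psi => [j phi||a IHa d IHd|a IHa|j a IHa|j phi a IHa|a IHa] c /= pos w.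
- exact: covary_iff.
- by rewrite pos; apply: EF.
- by case: pos => /IHa Ha /IHd Hd; apply: covary_and.
- by move: pos => /IHa/(_ w); rewrite covary_flip; apply: covary_not.
- by move: pos => /IHa Ha; apply: covary_all => u; apply: covary_all => _; apply: Ha.
- case: pos => /IHa Ha pos_phi; have [occ|noX] := classic (occX a).
    by apply: omodels_covary (pos_phi occ) _; apply: Gset_covary.
  by apply/covary_iff/osat_ext/Gset_ext => u; apply: sem_indep_X.
- exact: covary_iff.
Qed.

Lemma sem_mono (psi : fml n) :
  positive_in_X psi -> forall E F : world M -> Prop,
  (forall w, E w -> F w) -> forall w, sem M psi E w -> sem M psi F w.
Proof. by move=> pos E F EF w; exact: (@sem_covary psi true E F EF true pos w). Qed.

End Semantics.

Section GreatestFixpoint.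

Variables (W : Type) (f : (W -> Prop) -> W -> Prop).

Let step (F : W -> Prop) : W -> Prop := fun w => f F w /\ F w.

Lemma tf_iter_stage : stage step (tf_iter step).
Proof. exact: (stage_lim (S := stage step)). Qed.

Lemma tf_iter_postfixed w : tf_iter step w -> f (tf_iter step) w.
Proof. by move=> H; apply: (H _ (stage_step tf_iter_stage)).1. Qed.

Lemma postfixed_sub_tf_iter (E : W -> Prop) :
  (forall E F, (forall w, E w -> F w) -> forall w, f E w -> f F w) ->
  (forall w, E w -> f E w) -> forall w, E w -> tf_iter step w.
Proof.
move=> f_mono Ef w Ew F stF; elim: stF w Ew => [//|F' _ EF'|S _ ES] w Ew.
- by split; [apply: f_mono EF' _ _; apply: Ef | apply: EF'].
- by move=> F' SF'; apply: ES.
Qed.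

End GreatestFixpoint.

Theorem mainTheorem8 (n : nat) (G : game n) (psi : fml n) :
  wf psi -> positive_in_X psi ->
  forall M : bmodel G,
    (forall E F : world M -> Prop,
        (forall w, E w -> F w) -> forall w, sem M psi E w -> sem M psi F w) /\
    (nu_free psi -> forall (E0 : world M -> Prop) (w : world M),
        sem M (Nu psi) E0 w <->
        exists E : world M -> Prop, (forall u, E u -> sem M psi E u) /\ E w).
Proof.
move=> _ pos M; have mono := @sem_mono n G M psi pos.
split=> // _ E0 w /=; split.
- by move=> Hw; exists (tf_iter (fun F u => sem M psi F u /\ F u));
    split=> // u; apply: tf_iter_postfixed.
- by case=> E [Ef Ew]; exact: (@postfixed_sub_tf_iter _ (sem M psi) E mono Ef w Ew).
Qed.
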